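(* Let $G$ be a bipartite simple graph with stable sets $X$ and $Y$, suppose $G\cong H_1\oplus H_2$ is a decomposition of $G$, and let $n\ge1$. If $G$ is edge-magic (respectively, super edge-magic), then $S_{2n}(G;H_1,H_2)$ is edge-magic (respectively, super edge-magic).
   Context: For a $(p,q)$-graph $G$ ($p$ vertices, $q$ edges), an edge-magic labeling is a bijection $f:V(G)\cup E(G)\to[1,p+q]$ such that $f(x)+f(xy)+f(y)$ is constant for every edge $xy$; it is super edge-magic if moreover $f(V(G))=[1,p]$. A decomposition $G\cong H_1\oplus H_2$ means $H_1,H_2$ are subgraphs of $G$ whose edge sets partition $E(G)$. Writing $X=\{x_i\}_{i=1}^s$, $Y=\{y_j\}_{j=1}^t$, $S_{2n}(G;H_1,H_2)$ is the graph with vertex set $X\cup Y\cup\bigcup_{k=1}^n X_k\cup\bigcup_{k=1}^n Y_k$, where $X_k=\{x_i^k\}_{i=1}^s$, $Y_k=\{y_j^k\}_{j=1}^t$ are new vertices, and edge set $E(G)\cup\{x_iy_j^k: x_iy_j\in E(H_1),\,k\in[1,n]\}\cup\{x_i^ky_j: x_iy_j\in E(H_2),\,k\in[1,n]\}$. *)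

From mathcomp Require Import all_boot.
Set Implicit Arguments. Unset Strict Implicit. Unset Printing Implicit Defensive.

(* A finite simple graph is given by a vertex finType T and an adjacency
   relation e (assumed symmetric, irreflexive where used). Its edge set is the
   set of unordered pairs {x,y} with e x y. *)
Definition graph_edges (T : finType) (e : rel T) : {set {set T}} :=
  [set [set x; y] | x in T, y in T & e x y].

(* Labels of vertices and edges are packaged in one function on T + {set T};
   the domain of the labeling is V(G) (inl) together with E(G) (inr). *)
Definition lab_dom (T : finType) (e : rel T) : pred (T + {set T}) :=
  fun z => match z with inl _ => true | inr E => E \in graph_edges e end.

Definition is_total_labeling (T : finType) (e : rel T) (f : T + {set T} -> nat) :=
  let p := #|T| in let q := #|graph_edges e| in
  [/\ {in lab_dom e &, injective f},
      (forall z, lab_dom e z -> 1 <= f z <= p + q) &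
      (forall k, 1 <= k <= p + q -> exists2 z, lab_dom e z & f z = k)].

Definition edge_magic_labeling (T : finType) (e : rel T) (f : T + {set T} -> nat) :=
  is_total_labeling e f /\
  exists c : nat, forall x y, e x y -> f (inl x) + f (inr [set x; y]) + f (inl y) = c.

Definition edge_magic (T : finType) (e : rel T) :=
  exists f, edge_magic_labeling e f.

Definition super_edge_magic (T : finType) (e : rel T) :=
  exists f, edge_magic_labeling e f /\ (forall x : T, f (inl x) <= #|T|).

(* Bipartite graph G with stable sets X = {x_i}_{i<s} (inl) and
   Y = {y_j}_{j<t} (inr); x_i y_j is an edge iff E i j. *)
Definition bip_rel (s t : nat) (E : 'I_s -> 'I_t -> bool) : rel ('I_s + 'I_t) :=
  fun u v => match u, v with
             | inl i, inr j => E i j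
             | inr j, inl i => E i j
             | _, _ => false
             end.

(* Vertex set of S_{2n}(G;H1,H2):
   inl (inl i) = x_i, inl (inr j) = y_j,
   inr (inl (i,k)) = x_i^k, inr (inr (j,k)) = y_j^k  (copy index k : 'I_n). *)
Definition S2n_vert (s t n : nat) : finType :=
  (('I_s + 'I_t) + (('I_s * 'I_n) + ('I_t * 'I_n)))%type.

Definition S2n_adj (s t n : nat) (E E1 E2 : 'I_s -> 'I_t -> bool)
  (u v : S2n_vert s t n) : bool :=
  match u, v with
  | inl (inl i), inl (inr j) => E i j
  | inl (inl i), inr (inr (j, _)) => E1 i j          (* x_i y_j^k, x_iy_j in H1 *)
  | inr (inl (i, _)), inl (inr j) => E2 i j          (* x_i^k y_j, x_iy_j in H2 *)
  | _, _ => false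
  end.

Definition S2n {s t : nat} (n : nat) (E E1 E2 : 'I_s -> 'I_t -> bool) : rel (S2n_vert s t n) :=
  fun u v => S2n_adj E E1 E2 u v || S2n_adj E E1 E2 v u.
Arguments S2n {s t} n E E1 E2 _ _.

From mathcomp Require Import all_boot.
From mathcomp Require Import zify.
From Stdlib Require Import Lia.
Set Implicit Arguments. Unset Strict Implicit. Unset Printing Implicit Defensive.

(* Every vertex v of S_{2n}(G;H1,H2) is a copy of a vertex base(v) of G, with
   copy rank 0 for the vertex of G itself and k+1 for its k-th new copy.  Each
   edge of S_{2n} lies over an edge of G, and over an edge x_i y_j of G and for
   each r in [0,n] there is exactly one edge whose endpoint ranks sum to n - r:
   x_i y_j itself for r = n, otherwise x_i y_j^k or x_i^k y_j (k = n-r-1)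
   according as x_i y_j lies in H1 or in H2.  So every vertex or edge z of
   S_{2n} is coded bijectively by its projection onto G and a residue
   rho(z) in [0,n].  Given a labeling f of G, z receives the rho(z)-th number
   of the block of n+1 consecutive integers assigned to f(projection of z).
   This is a bijection onto [1, (n+1)(p+q)]; the residues along each edge sum
   to n, so a magic constant c becomes (n+1)(c-3)+n+3; and vertex labels of f
   at most p become at most (n+1)p = |V(S_{2n})|. *)

Lemma edgesP (T : finType) (e : rel T) (S : {set T}) :
  reflect (exists x y, e x y /\ S = [set x; y]) (S \in graph_edges e).
Proof.
apply: (iffP imset2P) => [[x y _]|[x [y [exy ->]]]].
  by rewrite inE => exy ->; exists x, y.
by exists x y; rewrite ?inE.
Qed.

Lemma imset_set2 (A B : finType) (h : A -> B) (a b : A) :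
  h @: [set a; b] = [set h a; h b].
Proof. by rewrite imsetU1 imset_set1. Qed.

Lemma card_lab_dom (T : finType) (e : rel T) :
  #|lab_dom e| = #|T| + #|graph_edges e|.
Proof.
have -> : #|lab_dom e| = #|[set inl x | x : T] :|: [set inr S | S in graph_edges e]|.
  apply: eq_card => -[x|S]; rewrite in_setU /=.
    by apply/esym/orP; left; apply/imsetP; exists x.
  apply/esym; apply/orP/idP => [[/imsetP [] //|/imsetP [S' HS [->]] //]|HS].
  by right; apply/imsetP; exists S.
rewrite cardsU (_ : _ :&: _ = set0) ?cards0 ?subn0; last first.
  by apply/setP => z; rewrite !inE; apply/andP => -[/imsetP [x _ ->] /imsetP [S _]].
by rewrite !card_in_imset // => ? ? _ _ [].
Qed.

(* A map injective on V(G) + E(G) that hits exactly [1,N] is a total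
   labeling; counting shows N = p + q. *)
Lemma total_labeling_of_bij (T : finType) (e : rel T) (g : T + {set T} -> nat) N :
  {in lab_dom e &, injective g} ->
  (forall z, lab_dom e z -> 1 <= g z <= N) ->
  (forall k, 1 <= k <= N -> exists2 z, lab_dom e z & g z = k) ->
  is_total_labeling e g.
Proof.
move=> g_inj g_range g_onto.
suff card_eq : #|T| + #|graph_edges e| = N by rewrite /is_total_labeling card_eq.
rewrite -card_lab_dom cardE -(size_map g) -(size_iota 1 N).
apply/perm_size/uniq_perm; rewrite ?iota_uniq ?map_inj_in_uniq ?enum_uniq //.
  by move=> x y; rewrite !mem_enum; apply: g_inj.
move=> k; rewrite mem_iota; apply/mapP/idP => [[z]|Hk].
  by rewrite mem_enum => /g_range; lia.
by have [|z Hz <-] := g_onto k; [lia | exists z; rewrite ?mem_enum].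
Qed.

Lemma total_labeling_pos (T : finType) (e : rel T) (f : T + {set T} -> nat) z :
  is_total_labeling e f -> lab_dom e z -> 0 < f z.
Proof. by case=> _ f_range _ /f_range /andP []. Qed.

(* The r-th element (from 0) of the a-th block (from 1) of L consecutive
   positive integers. *)
Definition block (L a r : nat) : nat := L * a.-1 + r + 1.

Lemma block_inj L a1 a2 r1 r2 : 0 < a1 -> 0 < a2 -> r1 < L -> r2 < L ->
  block L a1 r1 = block L a2 r2 -> a1 = a2 /\ r1 = r2.
Proof.
move=> a1_gt0 a2_gt0 r1_lt r2_lt /eqP; rewrite /block eqn_add2r => /eqP eq12.
have L_gt0 : 0 < L by apply: leq_ltn_trans r1_lt.
have := congr1 (modn^~ L) eq12; have := congr1 (divn^~ L) eq12.
rewrite ![L * _]mulnC !divnMDl // !modnMDl !divn_small // !modn_small // !addn0.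
by move=> eqa ->; split=> //; rewrite -(prednK a1_gt0) -(prednK a2_gt0) eqa.
Qed.

Lemma block_range L N a r : 1 <= a <= N -> r < L -> 1 <= block L a r <= L * N.
Proof.
move=> /andP [a_gt0 a_le] r_lt; rewrite /block addn1 ltn0Sn /=.
have : L * a.-1 + L <= L * N by rewrite addnC -mulnS prednK // leq_mul2l a_le orbT.
lia.
Qed.

Lemma block_onto L N k : 1 <= k <= L * N ->
  exists a r, [/\ 1 <= a <= N, r < L & block L a r = k].
Proof.
move=> /andP [k_gt0 k_le]; have L_gt0 : 0 < L by case: L k_le => //; lia.
exists (k.-1 %/ L).+1, (k.-1 %% L); split; rewrite ?ltn_mod //.
  rewrite ltn0Sn ltn_divLR // mulnC; lia.
by rewrite /block /= mulnC -divn_eq addn1 prednK.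
Qed.

Lemma block_sum3 L a b c r1 r2 r3 : 0 < a -> 0 < b -> 0 < c ->
  block L a r1 + block L b r2 + block L c r3 = L * (a + b + c - 3) + (r1 + r2 + r3) + 3.
Proof.
move=> a_gt0 b_gt0 c_gt0; rewrite /block.
have -> : a + b + c - 3 = a.-1 + b.-1 + c.-1 by lia.
rewrite !mulnDr; lia.
Qed.

(* An element z of V(G') + E(G')
   is coded by its image lift_lab z in V(G) + E(G) and a residue rho z < L;
   when this coding is a bijection onto (V(G) + E(G)) x [0,L), labelings of G
   blow up to labelings of G'. *)
Section BlowUp.
Variables (T T' : finType) (e : rel T) (e' : rel T') (L : nat).
Variables (pr : T' -> T) (rho : T' + {set T'} -> nat).

Definition lift_lab (z : T' + {set T'}) : T + {set T} :=
  match z with inl v => inl (pr v) | inr A => inr (pr @: A) end.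

Hypothesis pr_hom : forall x y, e' x y -> e (pr x) (pr y).
Hypothesis rho_lt : forall z, lab_dom e' z -> rho z < L.
Hypothesis code_inj : {in lab_dom e' &, forall z1 z2,
  lift_lab z1 = lift_lab z2 -> rho z1 = rho z2 -> z1 = z2}.
Hypothesis code_onto : forall w r, lab_dom e w -> r < L ->
  exists2 z, lab_dom e' z & lift_lab z = w /\ rho z = r.

Definition blowup (f : T + {set T} -> nat) (z : T' + {set T'}) : nat :=
  block L (f (lift_lab z)) (rho z).

Lemma lift_lab_dom z : lab_dom e' z -> lab_dom e (lift_lab z).
Proof.
case: z => //= A /edgesP [x [y [exy ->]]].
by apply/edgesP; exists (pr x), (pr y); rewrite imset_set2 pr_hom.
Qed.

Lemma blowup_total f : is_total_labeling e f -> is_total_labeling e' (blowup f).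
Proof.
move=> f_tot; have [f_inj f_range f_onto] := f_tot.
have f_pos z : lab_dom e' z -> 0 < f (lift_lab z).
  by move/lift_lab_dom; apply: total_labeling_pos.
apply: (@total_labeling_of_bij _ _ _ (L * (#|T| + #|graph_edges e|))).
- move=> z1 z2 dz1 dz2 eq12.
  have [eqf eqrho] := block_inj (f_pos _ dz1) (f_pos _ dz2) (rho_lt dz1) (rho_lt dz2) eq12.
  by apply: (code_inj dz1 dz2) => //; apply: f_inj => //; apply: lift_lab_dom.
- by move=> z dz; rewrite block_range ?rho_lt ?f_range ?lift_lab_dom.
move=> k /block_onto [a [r [a_range r_lt <-]]].
have [w dw <-] := f_onto a a_range.
by have [z dz [<- <-]] := code_onto dw r_lt; exists z.
Qed.

Lemma blowup_magic f :
  (exists r0, forall x y, e' x y -> rho (inl x) + rho (inr [set x; y]) + rho (inl y) = r0) ->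
  edge_magic_labeling e f -> edge_magic_labeling e' (blowup f).
Proof.
move=> [r0 rho_magic] [f_tot [c f_magic]]; split; first exact: blowup_total.
exists (L * (c - 3) + r0 + 3) => x y exy.
have f_pos z : lab_dom e z -> 0 < f z by apply: total_labeling_pos.
have dxy : [set pr x; pr y] \in graph_edges e.
  by apply/edgesP; exists (pr x), (pr y); rewrite pr_hom.
by rewrite /blowup /= imset_set2 block_sum3 ?f_pos ?f_magic ?rho_magic ?pr_hom.
Qed.

Lemma blowup_vertex_le f v : is_total_labeling e f ->
  f (inl (pr v)) <= #|T| -> blowup f (inl v) <= L * #|T|.
Proof.
move=> f_tot f_le.
have f_range : 1 <= f (inl (pr v)) <= #|T|.
  by rewrite f_le andbT (total_labeling_pos f_tot).
by case/andP: (block_range f_range (rho_lt (isT : lab_dom e' (inl v)))).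
Qed.

End BlowUp.

Section S2nBlowUp.
Variables (s t n : nat) (E E1 E2 : 'I_s -> 'I_t -> bool).
Hypothesis Hpart : forall i j, E i j = E1 i j || E2 i j.
Hypothesis Hdisj : forall i j, ~~ (E1 i j && E2 i j).
Local Notation V := (S2n_vert s t n).
Local Notation G := (bip_rel E).
Local Notation G' := (S2n n E E1 E2).

Definition base (v : V) : 'I_s + 'I_t :=
  match v with inl w => w | inr (inl (i, _)) => inl i | inr (inr (j, _)) => inr j end.

Definition copy_rank (v : V) : nat :=
  match v with inl _ => 0 | inr (inl (_, k)) => k.+1 | inr (inr (_, k)) => k.+1 end.

Definition edge_rank (A : {set V}) : nat := \sum_(u in A) copy_rank u.

Definition S2n_rho (z : V + {set V}) : nat :=
  match z with inl v => copy_rank v | inr A => n - edge_rank A end.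

Lemma copy_rank_le v : copy_rank v <= n.
Proof. by case: v => [?|[[? k]|[? k]]] /=. Qed.

Lemma base_inj v1 v2 : base v1 = base v2 -> copy_rank v1 = copy_rank v2 -> v1 = v2.
Proof.
case: v1 => [[i|j]|[[i k]|[j k]]]; case: v2 => [[i'|j']|[[i' k']|[j' k']]] //= [->] //;
  by move=> [/ord_inj ->].
Qed.

Lemma copy_onto w r : r <= n -> exists v : V, base v = w /\ copy_rank v = r.
Proof.
case: r => [|r] r_le; first by exists (inl w).
case: w => [i|j]; first by exists (inr (inl (i, Ordinal r_le))).
by exists (inr (inr (j, Ordinal r_le))).
Qed.

Lemma S2n_edge x y : G' x y ->
  [/\ x != y, G (base x) (base y) & (copy_rank x == 0) || (copy_rank y == 0)].
Proof.
rewrite /S2n; case: x => [[i|j]|[[i k]|[j k]]]; case: y => [[i'|j']|[[i' k']|[j' k']]] //=;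
  by rewrite ?orbF Hpart => exy; split; rewrite ?exy ?orbT.
Qed.

Lemma edge_rank2 x y : x != y -> edge_rank [set x; y] = copy_rank x + copy_rank y.
Proof. by move=> neq_xy; rewrite /edge_rank big_setU1 ?big_set1 // inE. Qed.

Lemma edge_rank_le x y : G' x y -> edge_rank [set x; y] <= n.
Proof.
case/S2n_edge=> neq_xy _ rank0; rewrite edge_rank2 //.
by have := copy_rank_le x; have := copy_rank_le y; lia.
Qed.

Definition canon_edge (i : 'I_s) (j : 'I_t) (m : nat) : {set V} :=
  if m is k.+1 then
    if (insub k : option 'I_n) is Some k' then
      if E1 i j then [set inl (inl i); inr (inr (j, k'))]
      else [set inr (inl (i, k')); inl (inr j)]
    else set0
  else [set inl (inl i); inl (inr j)].

Lemma canon_edgeP i j m : E i j -> m <= n ->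
  [/\ canon_edge i j m \in graph_edges G', base @: canon_edge i j m = [set inl i; inr j]
    & edge_rank (canon_edge i j m) = m].
Proof.
move=> eij; case: m => [|k] k_lt /=.
  split; rewrite ?imset_set2 ?edge_rank2 //.
  by apply/edgesP; do 2 eexists; split; last reflexivity; rewrite /S2n /= eij.
rewrite insubT /=; case E1ij : (E1 i j).
  split; rewrite ?imset_set2 ?edge_rank2 //.
  by apply/edgesP; do 2 eexists; split; last reflexivity; rewrite /S2n /= E1ij.
have E2ij : E2 i j by move: eij; rewrite Hpart E1ij.
split; rewrite ?imset_set2 ?edge_rank2 1?setUC //= ?addn0 //.
by apply/edgesP; do 2 eexists; split; last reflexivity; rewrite /S2n /= E2ij.
Qed.

(* Every edge of S_{2n} is the canonical edge of its projection and rank;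
   this is where disjointness of H1 and H2 is needed. *)
Lemma S2n_edge_canon A : A \in graph_edges G' -> exists i j,
  base @: A = [set inl i; inr j] /\ A = canon_edge i j (edge_rank A).
Proof.
case/edgesP=> x [y [exy ->]]; wlog adj_xy : x y exy / S2n_adj E E1 E2 x y.
  move=> oriented; case/orP: (exy) => [|adj_yx]; first exact: oriented.
  by rewrite setUC; apply: oriented; rewrite // /S2n adj_yx.
have [neq_xy _ _] := S2n_edge exy; rewrite edge_rank2 //.
have insub_ord (k : 'I_n) : insub (k : nat) = Some k := valK k.
move: adj_xy; case: x {exy neq_xy} => [[i|j]|[[i k]|[j k]]];
  case: y => [[i'|j']|[[i' k']|[j' k']]] //= adj; exists i, j';
  rewrite imset_set2 //= ?addn0 ?insub_ord; split=> //.
- by rewrite adj.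
- by have := Hdisj i j'; rewrite adj andbT => /negbTE ->.
Qed.

Lemma bip_edge_shape B : B \in graph_edges G ->
  exists i j, E i j /\ B = [set inl i; inr j].
Proof.
case/edgesP=> -[i|j] [[i'|j'] [//= eij ->]]; first by exists i, j'.
by exists i', j; rewrite setUC.
Qed.

Lemma set2_lr_inj i1 i2 j1 j2 :
  [set inl i1; inr j1] = [set inl i2; inr j2] :> {set 'I_s + 'I_t} -> i1 = i2 /\ j1 = j2.
Proof.
move=> eq12.
have : inl i1 \in [set inl i2; inr j2] by rewrite -eq12 set21.
have : inr j1 \in [set inl i2; inr j2] by rewrite -eq12 set22.
by rewrite !in_set2 => /orP [/eqP //|/eqP [->]] /orP [/eqP [->]|/eqP].
Qed.

Lemma S2n_base_hom x y : G' x y -> G (base x) (base y).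
Proof. by case/S2n_edge. Qed.

Lemma S2n_rho_lt z : lab_dom G' z -> S2n_rho z < n.+1.
Proof. by case: z => [v|A] _ /=; rewrite ltnS ?copy_rank_le ?leq_subr. Qed.

Lemma S2n_code_inj : {in lab_dom G' &, forall z1 z2,
  lift_lab base z1 = lift_lab base z2 -> S2n_rho z1 = S2n_rho z2 -> z1 = z2}.
Proof.
move=> [v1|A1] [v2|A2] dA1 dA2 //= [eq_base] eq_rho; first by rewrite (base_inj eq_base).
have {}dA1 : A1 \in graph_edges G' := dA1.
have {}dA2 : A2 \in graph_edges G' := dA2.
have /edgesP [x1 [y1 [e1 def_A1]]] := dA1.
have /edgesP [x2 [y2 [e2 def_A2]]] := dA2.
have eq_rank : edge_rank A1 = edge_rank A2.
  by move: eq_rho (edge_rank_le e1) (edge_rank_le e2); rewrite -def_A1 -def_A2; lia.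
have [i1 [j1 [base1 ->]]] := S2n_edge_canon dA1.
have [i2 [j2 [base2 ->]]] := S2n_edge_canon dA2.
have [-> ->] := set2_lr_inj (etrans (esym base1) (etrans eq_base base2)).
by rewrite eq_rank.
Qed.

Lemma S2n_code_onto w r : lab_dom G w -> r < n.+1 ->
  exists2 z, lab_dom G' z & lift_lab base z = w /\ S2n_rho z = r.
Proof.
rewrite ltnS; case: w => [u|B] /= dB r_le.
  by have [v [<- <-]] := copy_onto u r_le; exists (inl v).
have [i [j [eij ->]]] := bip_edge_shape dB.
have [dA baseA rankA] := canon_edgeP eij (leq_subr r n).
by exists (inr (canon_edge i j (n - r))); rewrite //= baseA rankA subKn.
Qed.

(* Residues along each edge sum to n, since one endpoint has rank 0. *)
Lemma S2n_rho_magic x y : G' x y ->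
  S2n_rho (inl x) + S2n_rho (inr [set x; y]) + S2n_rho (inl y) = n.
Proof.
move=> exy; have [neq_xy _ rank0] := S2n_edge exy.
have := copy_rank_le x; have := copy_rank_le y.
by rewrite /= edge_rank2 //; lia.
Qed.

Lemma card_S2n_vert : #|V| = n.+1 * #|{: 'I_s + 'I_t}|.
Proof. by rewrite /S2n_vert !card_sum !card_prod !card_ord; lia. Qed.

End S2nBlowUp.

(* The blow-up of an (super) edge-magic labeling of G is an (super)
   edge-magic labeling of S_{2n}(G;H1,H2); the argument does not need n >= 1. *)
Theorem mainTheorem9 (s t n : nat) (E E1 E2 : 'I_s -> 'I_t -> bool)
  (Hpart : forall i j, E i j = E1 i j || E2 i j)
  (Hdisj : forall i j, ~~ (E1 i j && E2 i j))
  (Hn : 1 <= n) :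
  (edge_magic (bip_rel E) -> edge_magic (S2n n E E1 E2)) /\
  (super_edge_magic (bip_rel E) -> super_edge_magic (S2n n E E1 E2)).
Proof.
pose lift := blowup n.+1 (@base s t n) (@S2n_rho s t n).
have rho_lt := @S2n_rho_lt s t n E E1 E2.
have lift_magic f : edge_magic_labeling (bip_rel E) f ->
    edge_magic_labeling (S2n n E E1 E2) (lift f).
  apply: (blowup_magic (S2n_base_hom Hpart) rho_lt
            (S2n_code_inj Hpart Hdisj) (S2n_code_onto Hpart)).
  by exists n => x y; apply: S2n_rho_magic.
split=> [[f f_magic] | [f [f_magic f_super]]]; exists (lift f).
  exact: lift_magic.
split=> [|v]; first exact: lift_magic.
have [f_total _] := f_magic.
by rewrite card_S2n_vert; apply: (blowup_vertex_le rho_lt f_total (f_super _)).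
Qed.
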